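(* Let $X$ be an integral regular projective curve of genus $g$ over $\mathbb{F}_q$ and $\mathbf{n}_{m-1}=(n_0,\dots,n_{m-1})$ a tuple of positive integers. Assume that the $\mathbf{n}_{m-1}$-derived alpha invariants $\alpha^{(\mathbf{n}_{m-1})}_X(\ell)$ ($\ell=0,\dots,g-1$) and the beta invariant $\beta^{(\mathbf{n}_{m-1})}_X$ are all strictly positive. Then for every positive integer $k$, $\widehat\zeta^{(\mathbf{n}_{m-1})}_X(k)>0$ and $\widehat v_k=\prod_{j=1}^k\widehat\zeta^{(\mathbf{n}_{m-1})}_X(j)>0$.
   Context: Let $\zeta_X(s)=\sum_{D\ge 0}N(D)^{-s}$ be the Artin zeta function of $X$ ($D$ running over effective divisors) and $\widehat\zeta_X(s)=q^{s(g-1)}\zeta_X(s)$ the complete Artin zeta function, a rational function of $q^{-s}$. Derived zeta functions are defined recursively. For the empty tuple $\mathbf{n}_{-1}=()$ put $q_{\mathbf{n}_{-1}}=q$, $T_{\mathbf{n}_{-1}}=q^{-s}$, $\widehat\zeta^{(\mathbf{n}_{-1})}_X=\widehat\zeta_X$. For a tuple $\mathbf{n}_m=(n_0,\dots,n_m)$ of positive integers ($m\ge 0$) put $\mathbf{n}_{m-1}=(n_0,\dots,n_{m-1})$, $q_{\mathbf{n}_m}=q^{n_0n_1\cdots n_m}$, $T_{\mathbf{n}_m}=q^{-n_0n_1\cdots n_m s}$. Writing $\widehat Z^{(\mathbf{n}_{m-1})}_X(T_{\mathbf{n}_{m-1}}):=\widehat\zeta^{(\mathbf{n}_{m-1})}_X(s)$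 (a rational function of $T_{\mathbf{n}_{m-1}}$), set $\widehat\zeta^{(\mathbf{n}_{m-1})}_X(1):=\operatorname{Res}_{T_{\mathbf{n}_{m-1}}=1}\widehat Z^{(\mathbf{n}_{m-1})}_X(T_{\mathbf{n}_{m-1}})$ and for integers $N\ge 1$, $\widehat v_N:=\prod_{k=1}^{N}\widehat\zeta^{(\mathbf{n}_{m-1})}_X(k)$. Then $$\widehat\zeta^{(\mathbf{n}_m)}_X(s)=q_{\mathbf{n}_{m-1}}^{\binom{n_m}{2}(g-1)}\sum_{a=1}^{n_m}\Biggl(\sum_{\substack{k_1,\dots,k_p>0\\k_1+\cdots+k_p=n_m-a}}\frac{\widehat v_{k_1}\cdots\widehat v_{k_p}}{\prod_{j=1}^{p-1}(1-q_{\mathbf{n}_{m-1}}^{k_j+k_{j+1}})}\cdot\frac{1}{1-q_{\mathbf{n}_{m-1}}^{n_ms-n_m+a+k_p}}\Biggr)\widehat\zeta^{(\mathbf{n}_{m-1})}_X(n_ms-n_m+a)\Biggl(\sum_{\substack{l_1,\dots,l_r>0\\l_1+\cdots+l_r=a-1}}\frac{1}{1-q_{\mathbf{n}_{m-1}}^{-n_ms+n_m-a+1+l_1}}\cdot\frac{\widehat v_{l_1}\cdots\widehat v_{l_r}}{\prod_{j=1}^{r-1}(1-q_{\mathbf{n}_{m-1}}^{l_j+l_{j+1}})}\Biggr),$$ where the inner sums run over ordered tuples of positive integers (of any length) with the indicated sum, and an inner sum over tuples summing to $0$ is defined to be $1$. (For $m=0$ this is the rank $n_0$ non-abelian zeta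 function.) For a tuple $\mathbf{n}$, with $Q=q_{\mathbf{n}}$, $T=T_{\mathbf{n}}$, the derived alpha invariants $\alpha^{(\mathbf{n})}_X(\ell)$ ($0\le\ell\le g-1$) and beta invariant $\beta^{(\mathbf{n})}_X$ are the numbers for which $$\widehat Z^{(\mathbf{n})}_X(T)=\sum_{\ell=0}^{g-2}\alpha^{(\mathbf{n})}_X(\ell)\bigl(T^{\ell-(g-1)}+Q^{(g-1)-\ell}T^{(g-1)-\ell}\bigr)+\alpha^{(\mathbf{n})}_X(g-1)+\frac{(Q-1)T\beta^{(\mathbf{n})}_X}{(1-T)(1-QT)}$$ (such a representation exists); in particular $\beta^{(\mathbf{n})}_X=\operatorname{Res}_{T=1}\widehat Z^{(\mathbf{n})}_X(T)$. *)

From HB Require Import structures.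
From mathcomp Require Import all_boot all_order all_algebra.
From mathcomp Require Import all_classical all_reals topology normedtype.
Set Implicit Arguments. Unset Strict Implicit. Unset Printing Implicit Defensive.
Import Order.TTheory GRing.Theory Num.Theory.
Import numFieldNormedType.Exports.
Local Open Scope classical_set_scope.
Local Open Scope ring_scope.

Definition derived_q (q : nat) (ns : seq nat) : nat :=
  (q ^ (\prod_(n <- ns) n))%N.

(* The right-hand side of the alpha/beta representation of the derived
   complete zeta function hat Z^{(n)}_X(T), with Q = q_n:
     sum_{l=0}^{g-2} alpha(l) (T^{l-(g-1)} + Q^{(g-1)-l} T^{(g-1)-l})
     + alpha(g-1) + (Q-1) T beta / ((1-T)(1-QT)).
   For g = 0 there are no alpha invariants and the constant term is absent. *)
Definition Zrep (R : realType) (g : nat) (Q : R) (alpha : nat -> R) (beta : R)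
  (T : R) : R :=
  \sum_(l < g.-1) alpha l * (T ^- (g.-1 - l) + (Q * T) ^+ (g.-1 - l))
  + (if g is 0 then 0 else alpha g.-1)
  + (Q - 1) * T * beta / ((1 - T) * (1 - Q * T)).

Definition residue_at1 (R : realType) (Z : R -> R) : R :=
  lim ((fun T => (T - 1) * Z T) @ (1 : R)^').

(* hat zeta(k) for an integer k >= 1, where T = Q^{-s}:
   hat zeta(1) := Res_{T=1} hat Z(T), and hat zeta(k) := hat Z(Q^{-k}) for k >= 2. *)
Definition zeta_hat_val (R : realType) (Q : R) (Z : R -> R) (k : nat) : R :=
  if k == 1%N then residue_at1 Z else Z (Q ^- k).

Definition v_hat (R : realType) (Q : R) (Z : R -> R) (N : nat) : R :=
  \prod_(1 <= k < N.+1) zeta_hat_val Q Z k.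

(* At T = Q^-k with k >= 2 we have 0 < T < QT < 1, so every term of the
   alpha/beta representation of Z is nonnegative and the beta term is positive.
   At k = 1 the value is the residue at T = 1: all terms but the beta term are
   regular there, and (T - 1)(Q - 1)T beta / ((1 - T)(1 - QT)) tends to beta. *)

From mathcomp Require Import all_boot all_order all_algebra.
From mathcomp Require Import all_classical all_reals topology normedtype.
From mathcomp Require Import realfun ring.
Import Order.TTheory GRing.Theory Num.Theory.
Import numFieldNormedType.Exports.
Local Open Scope classical_set_scope.
Local Open Scope ring_scope.

Lemma derived_q_gt1 (q : nat) (ns : seq nat) :
  (1 < q)%N -> all (fun n => 0 < n)%N ns -> (1 < derived_q q ns)%N.
Proof.
move=> q_gt1 ns_gt0; rewrite /derived_q -[1%N](expn0 q) ltn_exp2l //.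
by rewrite big_seq prodn_cond_gt0 // => n /(allP ns_gt0).
Qed.

Lemma residue_at1_continuous (R : realType) (Z h : R -> R) :
  {for (1 : R), continuous h} ->
  (\forall T \near (1 : R)^', (T - 1) * Z T = h T) ->
  residue_at1 Z = h 1.
Proof.
move=> h_cont Zh; apply: cvg_lim => //.
have h_cvg : h @ (1 : R)^' --> h 1 by apply: cvg_within_filter.
by apply: cvg_trans h_cvg; apply: near_eq_cvg; apply: filterS Zh.
Qed.

Lemma v_hat_gt0 (R : realType) (Q : R) (Z : R -> R) (N : nat) :
  (forall k, (0 < k)%N -> 0 < zeta_hat_val Q Z k) -> 0 < v_hat Q Z N.
Proof.
by move=> zeta_gt0; rewrite /v_hat big_nat prodr_gt0 // => k /andP[/zeta_gt0].
Qed.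

Section DerivedZetaRepresentation.
Variables (R : realType) (g : nat) (Q : R) (alpha : nat -> R) (beta : R).

Definition Zrep_reg (T : R) : R :=
  \sum_(l < g.-1) alpha l * (T ^- (g.-1 - l) + (Q * T) ^+ (g.-1 - l))
  + (if g is 0 then 0 else alpha g.-1).

Definition Zrep_represents (Z : R -> R) : Prop :=
  forall T, T != 0 -> T != 1 -> Q * T != 1 -> Z T = Zrep g Q alpha beta T.

Lemma ZrepE (T : R) : Zrep g Q alpha beta T =
  Zrep_reg T + (Q - 1) * T * beta / ((1 - T) * (1 - Q * T)).
Proof. by []. Qed.

Lemma Zrep_reg_continuous (T : R) : T != 0 -> {for T, continuous Zrep_reg}.
Proof.
move=> T_neq0; apply: continuousD; last exact: cst_continuous.
apply: cvg_big => [|l _]; first exact: add_continuous.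
apply: cvgMl_tmp; apply: cvgD.
  by apply: cvgV; [rewrite expf_neq0 | exact: exprn_continuous].
rewrite exprMn; under eq_cvg do rewrite exprMn.
by apply: cvgMl_tmp; exact: exprn_continuous.
Qed.

Lemma Zrep_gt0 (T : R) :
  1 < Q -> (forall l, (l < g)%N -> 0 < alpha l) -> 0 < beta ->
  0 < T -> Q * T < 1 -> 0 < Zrep g Q alpha beta T.
Proof.
move=> Q_gt1 alpha_gt0 beta_gt0 T_gt0 QT_lt1.
have T_lt1 : T < 1 by apply: le_lt_trans QT_lt1; rewrite ler_peMl // ltW.
have alpha_ge0 l : (l < g)%N -> 0 <= alpha l by move/alpha_gt0/ltW.
rewrite ZrepE ltr_wpDl //.
  rewrite addr_ge0 ?sumr_ge0 // => [l _|]; last first.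
    by case: g alpha_ge0 => // g' /(_ g'); apply.
  rewrite mulr_ge0 ?alpha_ge0 ?(leq_trans (ltn_ord l) (leq_pred g)) //.
  by rewrite addr_ge0 ?invr_ge0 ?exprn_ge0 ?mulr_ge0 // ltW // (lt_trans ltr01).
by rewrite divr_gt0 ?mulr_gt0 ?subr_gt0.
Qed.

Lemma residue_at1_Zrep (Z : R -> R) :
  Q != 1 -> Zrep_represents Z -> residue_at1 Z = beta.
Proof.
move=> Q_neq1 hZ.
pose h T := (T - 1) * Zrep_reg T + (Q - 1) * T * beta / (Q * T - 1).
have Q1_neq0 : Q - 1 != 0 by rewrite subr_eq0.
have -> : beta = h 1 by rewrite /h subrr mul0r add0r !mulr1 mulrAC divff ?mul1r.
have QT1_cont : {for (1 : R), continuous (fun T => Q * T - 1)}.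
  by apply: cvgB; [apply: cvgMl_tmp | exact: cvg_cst].
apply: residue_at1_continuous.
  apply: continuousD.
    apply: continuousM; last exact: Zrep_reg_continuous (oner_neq0 R).
    by apply: cvgB; [exact: cvg_id | exact: cvg_cst].
  apply: continuousM; last by apply: continuousV; rewrite // mulr1.
  by apply: cvgMr_tmp; apply: cvgMl_tmp.
near=> T.
have T_neq1 : T != 1 by near: T; exact: nbhs_dnbhs_neq.
have T_neq0 : T != 0.
  near: T; apply: nbhs_dnbhs.
  exact: (@cvgr_neq0 R R _ _ _ id 1 cvg_id (oner_neq0 R)).
have QT1_neq0 : Q * T - 1 != 0.
  near: T; apply: nbhs_dnbhs.
  by apply: (@cvgr_neq0 R R _ _ _ _ _ QT1_cont); rewrite mulr1.
have QT_neq1 : Q * T != 1 by rewrite -subr_eq0.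
rewrite hZ // ZrepE /h mulrDr; congr (_ + _).
by field; rewrite QT1_neq0 !subr_eq0 ![1 == _]eq_sym QT_neq1.
Unshelve. all: by end_near.
Qed.

Lemma zeta_hat_val_gt0 (Z : R -> R) (k : nat) :
  1 < Q -> (forall l, (l < g)%N -> 0 < alpha l) -> 0 < beta ->
  Zrep_represents Z -> (0 < k)%N -> 0 < zeta_hat_val Q Z k.
Proof.
move=> Q_gt1 alpha_gt0 beta_gt0 hZ k_gt0; rewrite /zeta_hat_val.
have [_|k_neq1] := eqVneq k 1%N.
  by rewrite (residue_at1_Zrep _ _ hZ) ?gt_eqF.
have [k' ->] : exists k', k = k'.+2.
  by case: k k_gt0 k_neq1 => [|[|k']] //; exists k'.
have Q_gt0 : 0 < Q := lt_trans ltr01 Q_gt1.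
have T_gt0 : 0 < Q ^- k'.+2 by rewrite invr_gt0 exprn_gt0.
have QT_lt1 : Q * Q ^- k'.+2 < 1.
  rewrite exprS invfM mulrA divff ?gt_eqF // mul1r.
  by rewrite invf_lt1 ?exprn_gt0 ?exprn_egt1.
have T_lt1 : Q ^- k'.+2 < 1 by rewrite invf_lt1 ?exprn_gt0 ?exprn_egt1.
by rewrite hZ ?Zrep_gt0 ?(gt_eqF T_gt0) ?(lt_eqF T_lt1) ?(lt_eqF QT_lt1).
Qed.

End DerivedZetaRepresentation.

Theorem lemma2p9 (R : realType) (q : nat)
  (hq : exists p e : nat, [/\ prime p, (0 < e)%N & q = (p ^ e)%N])
  (g : nat) (ns : seq nat) (hns : all (fun n => (0 < n)%N) ns)
  (Z : R -> R) (alpha : nat -> R) (beta : R)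
  (hZ : forall T : R, T != 0 -> T != 1 -> (derived_q q ns)%:R * T != 1 ->
        Z T = Zrep g (derived_q q ns)%:R alpha beta T)
  (halpha : forall l : nat, (l < g)%N -> 0 < alpha l)
  (hbeta : 0 < beta)
  (k : nat) (hk : (0 < k)%N) :
  0 < zeta_hat_val (derived_q q ns)%:R Z k /\
  0 < v_hat (derived_q q ns)%:R Z k.
Proof.
have Q_gt1 : 1 < (derived_q q ns)%:R :> R.
  case: hq => p [e [p_prime e_gt0 ->]].
  by rewrite ltr1n derived_q_gt1 // -[1%N](expn0 p) ltn_exp2l ?prime_gt1.
have zeta_gt0 j : (0 < j)%N -> 0 < zeta_hat_val (derived_q q ns)%:R Z j.
  by move=> j_gt0; apply: zeta_hat_val_gt0 hZ _.
by split; [exact: zeta_gt0 | exact: v_hat_gt0].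
Qed.
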